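(* Let $\Lambda$ be an artin algebra and $C,Y$ $\Lambda$-modules. The subset ${}^C[\to Y\rangle$ of the lattice $[\to Y\rangle$ is closed under meets: if $f_1: X_1\to Y$ and $f_2: X_2\to Y$ are right $C$-determined, and $g_1: X\to X_1$, $g_2: X\to X_2$ form a pullback of $f_1,f_2$, then $f_1g_1: X\to Y$ is right $C$-determined.
   Context: All modules are finite length left $\Lambda$-modules. For maps $f: X\to Y$, $f': X'\to Y$, write $f\preceq f'$ if $f=f'h$ for some $h: X\to X'$; right equivalence means $f\preceq f'$ and $f'\preceq f$, and $[f\rangle$ denotes the class; $[\to Y\rangle$ is the poset (lattice) of such classes with $[f\rangle\le [f'\rangle$ iff $f\preceq f'$. A map $f: X\to Y$ is right $C$-determined if for every map $f': X'\to Y$ such that $f'\phi$ factors through $f$ for every $\phi: C\to X'$, the map $f'$ itself factors through $f$. ${}^C[\to Y\rangle$ is the set of right equivalence classes of right $C$-determined maps ending in $Y$. *)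

From HB Require Import structures.
From mathcomp Require Import all_boot all_order all_algebra.
Set Implicit Arguments. Unset Strict Implicit. Unset Printing Implicit Defensive.
Import GRing.Theory.
Local Open Scope ring_scope.

Section ModuleDefs.
Variable R : pzRingType.

Definition submodule (M : lmodType R) (P : M -> Prop) : Prop :=
  [/\ P 0, (forall x y, P x -> P y -> P (x + y))
    & (forall (a : R) x, P x -> P (a *: x))].

Definition strict_sub (M : lmodType R) (P Q : M -> Prop) : Prop :=
  (forall x, P x -> Q x) /\ (exists x, Q x /\ ~ P x).

(** Finite length: the lengths of strictly increasing chains of submodules
    S_0 < S_1 < ... < S_m are bounded (the length of M is the supremum of
    such m). *)
Definition finite_length (M : lmodType R) : Prop :=
  exists n : nat, forall (m : nat) (S : nat -> M -> Prop),
    (forall i, (i <= m)%N -> submodule (S i)) ->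
    (forall i, (i < m)%N -> strict_sub (S i) (S i.+1)) ->
    (m <= n)%N.

Definition artinian_module (M : lmodType R) : Prop :=
  forall S : nat -> M -> Prop,
    (forall i, submodule (S i)) ->
    (forall i x, S i.+1 x -> S i x) ->
    exists N, forall i, (N <= i)%N -> forall x, S i x <-> S N x.

Definition factors_through (X0 X Y : lmodType R) (g : X0 -> Y) (f : X -> Y)
  : Prop :=
  exists h : {linear X0 -> X}, forall x, g x = f (h x).

Definition right_determined (C X Y : lmodType R) (f : X -> Y) : Prop :=
  forall (X' : lmodType R), finite_length X' ->
  forall f' : {linear X' -> Y},
    (forall phi : {linear C -> X'}, factors_through (fun c => f' (phi c)) f) ->
    factors_through f' f.

Definition is_pullback (X1 X2 X Y : lmodType R)
  (f1 : {linear X1 -> Y}) (f2 : {linear X2 -> Y})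
  (g1 : {linear X -> X1}) (g2 : {linear X -> X2}) : Prop :=
  (forall x, f1 (g1 x) = f2 (g2 x)) /\
  forall (Z : lmodType R), finite_length Z ->
  forall (h1 : {linear Z -> X1}) (h2 : {linear Z -> X2}),
    (forall z, f1 (h1 z) = f2 (h2 z)) ->
    exists h : {linear Z -> X},
      [/\ (forall z, g1 (h z) = h1 z), (forall z, g2 (h z) = h2 z)
        & forall h' : {linear Z -> X},
            (forall z, g1 (h' z) = h1 z) -> (forall z, g2 (h' z) = h2 z) ->
            forall z, h' z = h z].

End ModuleDefs.

Definition artin_algebra (L : pzRingType) : Prop :=
  exists (k : comPzRingType) (iota : {rmorphism k -> L}),
    [/\ artinian_module (k^o : lmodType k),
        (forall (a : k) (l : L), iota a * l = l * iota a)
      & exists (n : nat) (s : 'I_n -> L),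
          forall l : L, exists c : 'I_n -> k,
            l = \sum_(i < n) iota (c i) * s i].

From HB Require Import structures.
From mathcomp Require Import all_boot all_order all_algebra.

(* If [f'] is tested against [f1 g1 = f2 g2], every test map [f' phi] factors
   through both [f1] and [f2]; since these are right C-determined, [f'] itself
   factors through [f1] and [f2], and the pullback glues the two factorizations
   into one through [f1 g1]. *)

Section Pullback.
Variable L : pzRingType.

Lemma factors_through_comp (X0 X X' Y : lmodType L) (f' : X0 -> Y) (f : X -> Y)
    (g : {linear X' -> X}) :
  factors_through f' (fun x' => f (g x')) -> factors_through f' f.
Proof. by move=> [h Hh]; exists (g \o h)%FUN. Qed.

Lemma factors_through_pullback (X1 X2 X Y : lmodType L)
    (f1 : {linear X1 -> Y}) (f2 : {linear X2 -> Y})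
    (g1 : {linear X -> X1}) (g2 : {linear X -> X2})
    (X0 : lmodType L) (f' : {linear X0 -> Y}) :
  is_pullback f1 f2 g1 g2 -> finite_length X0 ->
  factors_through f' f1 -> factors_through f' f2 ->
  factors_through f' (fun x => f1 (g1 x)).
Proof.
move=> [_ pb] flX0 [h1 Hh1] [h2 Hh2].
have [h [Hg1 _ _]] := pb X0 flX0 h1 h2 (fun z => etrans (esym (Hh1 z)) (Hh2 z)).
by exists h => z /=; rewrite Hg1 Hh1.
Qed.

Lemma right_determined_pullback (C X1 X2 X Y : lmodType L)
    (f1 : {linear X1 -> Y}) (f2 : {linear X2 -> Y})
    (g1 : {linear X -> X1}) (g2 : {linear X -> X2}) :
  right_determined C f1 -> right_determined C f2 ->
  is_pullback f1 f2 g1 g2 ->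
  right_determined C (fun x => f1 (g1 x)).
Proof.
move=> rd1 rd2 pbf X0 flX0 f' Hf.
have comm x : f1 (g1 x) = f2 (g2 x) by case: pbf.
have Hf1 : factors_through f' f1.
  by apply: rd1 => // phi; apply: factors_through_comp (Hf phi).
have Hf2 : factors_through f' f2.
  apply: rd2 => // phi; apply: (@factors_through_comp _ _ _ _ _ _ g2).
  by have [h Hh] := Hf phi; exists h => c; rewrite Hh comm.
exact: factors_through_pullback pbf flX0 Hf1 Hf2.
Qed.

End Pullback.

Theorem proposition3p2 (L : pzRingType) (HL : artin_algebra L)
  (C Y X1 X2 X : lmodType L)
  (flC : finite_length C) (flY : finite_length Y) (flX1 : finite_length X1)
  (flX2 : finite_length X2) (flX : finite_length X)
  (f1 : {linear X1 -> Y}) (f2 : {linear X2 -> Y})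
  (g1 : {linear X -> X1}) (g2 : {linear X -> X2}) :
  right_determined C f1 -> right_determined C f2 ->
  is_pullback f1 f2 g1 g2 ->
  right_determined C (fun x : X => f1 (g1 x)).
Proof. exact: right_determined_pullback. Qed.
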